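(* In the storage model of the context, assume that the graph $\mathcal G$ on $\{1,\dots,n\}$ in which $j,k$ are adjacent iff $j,k\in S_i$ for some $i$ is connected, and that the linear system \[ \sum_{j=1}^{\kappa_i}\alpha_{ij}=\lambda_i\ (i=1,\dots,\mathcal K),\qquad \sum_{i=1}^{\mathcal K}\sum_{j=1}^{\kappa_i}\alpha_{ij}\,\delta_{\ell,s^i_j}=\tfrac1n\ (\ell=1,\dots,n) \] has a positive solution. Let the embedded load chain $X^e(m)$ be constructed using either the JSQ routing policy or the $\varepsilon$-PSERP. Then there exist $c_2>0$ and $a>0$ such that for all $x\in\mathbb N^n$ with $\max_{i}\bigl|x_i-\frac1n\sum_{j=1}^nx_j\bigr|\ge a$, \[ \mathbf E\bigl(f(X^e(m+1))-f(X^e(m))\mid X^e(m)=x\bigr)\le -c_2\sqrt{f(x)}, \] where $f(y)=\sum_{l=1}^n\bigl(y_l-\frac1n\sum_{k=1}^ny_k\bigr)^2$.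
   Context: Storage model: $n$ nodes, non-empty neighborhoods $S_1,\dots,S_{\mathcal K}\subset\{1,\dots,n\}$ covering $\{1,\dots,n\}$, $\kappa_i=|S_i|$, $S_i=\{s^i_1,\dots,s^i_{\kappa_i}\}$ a fixed enumeration. Items arrive at $S_i$ as independent Poisson processes with rates $\lambda_i>0$, $\sum_i\lambda_i=1$; each item is stored at one node of its neighborhood according to the routing policy, independently across arrivals. $X^e(m)\in\mathbb N^n$ is the vector of node loads after the $m$-th arrival. For $x\in\mathbb N^n$, $s^i_{j_{\min}}(x)$ is the first node of $S_i$ at which $x$ is minimal over $S_i$, $s^i_{j_{\max}}(x)$ the last node of $S_i$ at which $x$ is maximal over $S_i$. JSQ: an arriving item at $S_i$ goes to $s^i_{j_{\min}}(x)$. $\varepsilon$-PSERP (given a positive solution $\alpha_{ij}$ and $0<\varepsilon<\min\alpha_{ij}$): an item arriving at $S_i$ goes to $s^i_j$ with probability $(\alpha_{ij}+\varepsilon)/\lambda_i$ if $s^i_j=s^i_{j_{\min}}(x)$, $(\alpha_{ij}-\varepsilon)/\lambda_i$ if $s^i_j=s^i_{j_{\max}}(x)$, $\alpha_{ij}/\lambda_i$ otherwise; if $\kappa_i=1$ it goes to the unique node of $S_i$. $\delta_{\ell,m}$ is the Kronecker delta. *)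

From HB Require Import structures.
From mathcomp Require Import all_boot all_order all_algebra.
From mathcomp Require Import reals.
Unset Printing Implicit Defensive.
Import Order.TTheory GRing.Theory Num.Theory.
Local Open Scope ring_scope.

Section StorageModel.
Variables (R : realType) (n K : nat) (kappa : 'I_K -> nat).
(* s i j = s^i_j, the j-th node (0-based) of neighborhood S_i *)
Variable s : forall i : 'I_K, 'I_(kappa i) -> 'I_n.

Definition adjG : rel 'I_n :=
  fun j k => [exists i : 'I_K, [exists ab : 'I_(kappa i) * 'I_(kappa i),
               (s i ab.1 == j) && (s i ab.2 == k)]].

Definition G_connected : Prop := forall j k : 'I_n, connect adjG j k.

Definition pos_solution (lam : 'I_K -> R) (alpha : forall i : 'I_K, 'I_(kappa i) -> R) : Prop :=
  (forall i j, 0 < alpha i j) /\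
  (forall i, \sum_(j < kappa i) alpha i j = lam i) /\
  (forall l : 'I_n,
     \sum_(i < K) \sum_(j < kappa i) alpha i j * (s i j == l)%:R = n%:R^-1).

Definition minload (x : 'I_n -> nat) (i : 'I_K) : nat :=
  \big[minn/ \max_(j < kappa i) x (s i j)]_(j < kappa i) x (s i j).
Definition maxload (x : 'I_n -> nat) (i : 'I_K) : nat :=
  \max_(j < kappa i) x (s i j).

Definition is_jmin (x : 'I_n -> nat) (i : 'I_K) (j : 'I_(kappa i)) : bool :=
  (x (s i j) == minload x i) &&
  [forall k : 'I_(kappa i), ((k : nat) < j)%N ==> (x (s i k) != minload x i)].
Definition is_jmax (x : 'I_n -> nat) (i : 'I_K) (j : 'I_(kappa i)) : bool :=
  (x (s i j) == maxload x i) &&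
  [forall k : 'I_(kappa i), ((j : nat) < k)%N ==> (x (s i k) != maxload x i)].

(* routing probabilities: probability that an item arriving at S_i in state x
   is stored at s^i_j *)
Definition jsq_route (i : 'I_K) (x : 'I_n -> nat) (j : 'I_(kappa i)) : R :=
  (is_jmin x i j)%:R.

Definition pserp_route (lam : 'I_K -> R) (alpha : forall i : 'I_K, 'I_(kappa i) -> R)
  (eps : R) (i : 'I_K) (x : 'I_n -> nat) (j : 'I_(kappa i)) : R :=
  if kappa i == 1%N then 1
  else if is_jmin x i j then (alpha i j + eps) / lam i
  else if is_jmax x i j then (alpha i j - eps) / lam i
  else alpha i j / lam i.

Definition add_item (x : 'I_n -> nat) (v : 'I_n) : 'I_n -> nat :=
  fun l => (x l + (l == v))%N.

Definition mean (y : 'I_n -> nat) : R := (\sum_(k < n) (y k)%:R) / n%:R.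

Definition fL (y : 'I_n -> nat) : R := \sum_(l < n) ((y l)%:R - mean y) ^+ 2.

Definition maxdev (x : 'I_n -> nat) : R :=
  \big[Num.max/0]_(l < n) `|(x l)%:R - mean x|.

(* E( f(X^e(m+1)) - f(X^e(m)) | X^e(m) = x ) for the embedded chain:
   the next arrival comes from S_i with probability lam i (sum lam = 1),
   then goes to s^i_j with probability route i x j. *)
Definition drift (lam : 'I_K -> R)
  (route : forall i : 'I_K, ('I_n -> nat) -> 'I_(kappa i) -> R) (x : 'I_n -> nat) : R :=
  \sum_(i < K) lam i * \sum_(j < kappa i) route i x j * (fL (add_item x (s i j)) - fL x).

End StorageModel.

Arguments adjG {n K kappa} s.
Arguments G_connected {n K kappa} s.
Arguments pos_solution {R n K kappa} s lam alpha.
Arguments jsq_route {R n K kappa} s i x j.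
Arguments pserp_route {R n K kappa} s lam alpha eps i x j.
Arguments fL {R n} y.
Arguments mean {R n} y.
Arguments maxdev {R n} x.
Arguments drift {R n K kappa} s lam route x.

(* Storing an item at node [v] changes [f] by
   [2 dev x v + 1 - 1/n], so the drift is [1 - 1/n] plus twice the
   routing-weighted deviation of the receiving node.  Under the weights [alpha]
   of the linear system, which put mass [1/n] on every node, that weighted
   deviation vanishes.  PSERP moves weight [eps] from the last maximiser to the
   first minimiser of each neighbourhood and JSQ moves all the weight to it, so
   in both cases the drift is at most [1 - 2 beta S(x)], where [S(x)] sums
   [max - min] of the loads over the neighbourhoods.  Along paths of the
   connected graph every deviation, hence both the maximal deviation and
   [sqrt f], is [O(S(x))]; so once the maximal deviation is large,
   [1 - 2 beta S(x) <= - beta S(x) <= - c2 sqrt f]. *)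

From Pilot Require Import Defs.
From HB Require Import structures.
From mathcomp Require Import all_boot all_order all_algebra.
From mathcomp Require Import reals ring lra.
Import Order.TTheory GRing.Theory Num.Theory.
Local Open Scope ring_scope.

Set Implicit Arguments.
Unset Strict Implicit.

Lemma sum_delta_mulr (R : pzSemiRingType) (T : finType) (v : T) (F : T -> R) :
  \sum_(l : T) (l == v)%:R * F l = F v.
Proof.
by rewrite (bigD1 v) //= eqxx mul1r big1 ?addr0 // => l /negbTE ->; rewrite mul0r.
Qed.

Section Deviation.
Variables (R : realType) (n : nat).
Hypothesis n_gt0 : (0 < n)%N.
Local Notation add_item := (@add_item n).

Definition dev (x : 'I_n -> nat) (l : 'I_n) : R := (x l)%:R - mean x.

Lemma natr_n_neq0 : (n%:R : R) != 0.
Proof. by rewrite pnatr_eq0 -lt0n. Qed.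

Lemma sum_dev x : \sum_l dev x l = 0.
Proof.
rewrite /dev sumrB sumr_const card_ord /mean -[_ *+ n]mulr_natr.
by rewrite mulfVK ?subrr // natr_n_neq0.
Qed.

Lemma mean_add_item x v : mean (add_item x v) = mean x + n%:R^-1 :> R.
Proof.
rewrite /mean /Defs.add_item; under eq_bigr do rewrite natrD.
rewrite big_split /= mulrDl.
by under [X in _ + X / _]eq_bigr do rewrite -[_%:R]mulr1; rewrite sum_delta_mulr mul1r.
Qed.

(* Adding an item at [v] shifts the mean by [1/n]; expanding the squares, the
   [l]-independent terms sum to [1/n] and the linear terms to [-2/n * sum dev = 0]. *)
Lemma fL_add_item x v :
  fL (add_item x v) - fL x = 2 * dev x v + (1 - n%:R^-1) :> R.
Proof.
rewrite /fL mean_add_item -sumrB; set t : R := n%:R^-1.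
have expand l : ((add_item x v l)%:R - (mean x + t)) ^+ 2 - ((x l)%:R - mean x) ^+ 2
    = t ^+ 2 - 2 * t * dev x l + (l == v)%:R * (1 - 2 * t + 2 * dev x l).
  by rewrite /Defs.add_item /dev natrD; case: (l == v) => /=; ring.
under eq_bigr do rewrite expand.
rewrite !big_split /= sum_delta_mulr sumr_const card_ord sumrN -mulr_sumr sum_dev.
have -> : t ^+ 2 *+ n = t by rewrite -mulr_natr expr2 -mulrA mulVf ?mulr1 ?natr_n_neq0.
ring.
Qed.

Lemma dev_le_of_diff x l (B : R) :
  (forall k, `|(x l)%:R - (x k)%:R| <= B) -> `|dev x l| <= B.
Proof.
move=> Hdiff; have n_pos : (0 : R) < n%:R by rewrite ltr0n.
have -> : dev x l = (\sum_k ((x l)%:R - (x k)%:R)) / n%:R.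
  rewrite /dev /mean sumrB sumr_const card_ord mulrBl -[(x l)%:R *+ n]mulr_natr.
  by rewrite mulfK // natr_n_neq0.
rewrite normrM normfV (gtr0_norm n_pos) ler_pdivrMr //.
apply: le_trans (ler_norm_sum _ _ _) _.
have -> : B * n%:R = \sum_(k < n) B by rewrite sumr_const card_ord mulr_natr.
by apply: ler_sum.
Qed.

Lemma maxdev_le x (B : R) : 0 <= B -> (forall l, `|dev x l| <= B) -> maxdev x <= B.
Proof. by move=> B_ge0 Hdev; apply: bigmax_le => // l _; apply: Hdev. Qed.

Lemma sqrt_fL_le x (B : R) : 0 <= B -> (forall l, `|dev x l| <= B) ->
  Num.sqrt (fL x) <= n%:R * B.
Proof.
move=> B_ge0 Hdev; have nB_ge0 : 0 <= n%:R * B by rewrite mulr_ge0.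
rewrite -(ger0_norm nB_ge0) -sqrtr_sqr ler_wsqrtr //.
apply: (@le_trans _ _ (\sum_(l < n) B ^+ 2)).
  apply: ler_sum => l _; rewrite -real_normK ?num_real // lerXn2r ?nnegrE //.
  exact: Hdev.
have n_ge1 : (1 : R) <= n%:R by rewrite ler1n.
rewrite sumr_const card_ord -mulr_natr; nra.
Qed.

End Deviation.

Section Extremes.
Variables (n K : nat) (kappa : 'I_K -> nat) (s : forall i : 'I_K, 'I_(kappa i) -> 'I_n).
Arguments s : clear implicits.
Hypothesis kappa_gt0 : forall i, (0 < kappa i)%N.
Variables (x : 'I_n -> nat) (i : 'I_K).
Local Notation minload := (@Defs.minload n K kappa s x i).
Local Notation maxload := (@Defs.maxload n K kappa s x i).
Local Notation is_jmin := (@Defs.is_jmin n K kappa s x i).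
Local Notation is_jmax := (@Defs.is_jmax n K kappa s x i).

Lemma minload_le j : (minload <= x (s i j))%N.
Proof. by have := bigmin_le maxload j (fun j => x (s i j)); rewrite minEnat. Qed.

Lemma maxload_ge j : (x (s i j) <= maxload)%N.
Proof. exact: (leq_bigmax (F := fun j => x (s i j))). Qed.

Lemma minload_le_maxload : (minload <= maxload)%N.
Proof. exact: leq_trans (minload_le (Ordinal (kappa_gt0 i))) (maxload_ge _). Qed.

Lemma minload_attained : exists j, x (s i j) = minload.
Proof.
have [j _] := eq_bigmin (Ordinal (kappa_gt0 i)) predT (fun j => x (s i j)) isT
  (fun j _ => maxload_ge j).
by rewrite minEnat => Hj; exists j; rewrite /Defs.minload Hj.
Qed.

Lemma maxload_attained : exists j, x (s i j) = maxload.
Proof.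
rewrite /Defs.maxload; have [|j ->] := bigop.eq_bigmax (fun j : 'I_(kappa i) => x (s i j)).
  by rewrite card_ord.
by exists j.
Qed.

Lemma jmin_exists : exists j, is_jmin j.
Proof.
have [j0 Hj0] := minload_attained.
have [j /eqP Pj Hfirst] :=
  @arg_minnP _ j0 (fun j => x (s i j) == minload) (fun j => j : nat) (introT eqP Hj0).
exists j; rewrite /Defs.is_jmin Pj eqxx /=; apply/forallP => k; apply/implyP => lt_kj.
by apply: contraTN lt_kj => /Hfirst; rewrite -leqNgt.
Qed.

Lemma jmax_exists : exists j, is_jmax j.
Proof.
have [j0 Hj0] := maxload_attained.
have [j /eqP Pj Hlast] :=
  @arg_maxnP _ j0 (fun j => x (s i j) == maxload) (fun j => j : nat) (introT eqP Hj0).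
exists j; rewrite /Defs.is_jmax Pj eqxx /=; apply/forallP => k; apply/implyP => lt_jk.
by apply: contraTN lt_jk => /Hlast; rewrite -leqNgt.
Qed.

Lemma jmin_unique j j' : is_jmin j -> is_jmin j' -> j = j'.
Proof.
move=> /andP[Pj /forallP Fj] /andP[Pj' /forallP Fj']; apply/val_inj/eqP.
case: ltngtP => // lt.
- by have := implyP (Fj' j) lt; rewrite Pj.
- by have := implyP (Fj j') lt; rewrite Pj'.
Qed.

Lemma jmax_unique j j' : is_jmax j -> is_jmax j' -> j = j'.
Proof.
move=> /andP[Pj /forallP Fj] /andP[Pj' /forallP Fj']; apply/val_inj/eqP.
case: ltngtP => // lt.
- by have := implyP (Fj j') lt; rewrite Pj'.
- by have := implyP (Fj' j) lt; rewrite Pj.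
Qed.

(* If the first minimiser were the last maximiser, all loads on [S_i] would be
   equal, and then the first minimiser is index [0] and the last maximiser is
   index [kappa i - 1]; these differ once [kappa i > 1]. *)
Lemma jmin_neq_jmax j0 j1 : kappa i != 1%N -> is_jmin j0 -> is_jmax j1 -> j0 != j1.
Proof.
move=> kappa_neq1 /andP[P0 /forallP F0] /andP[P1 /forallP F1]; apply/eqP => E; subst j1.
have kappa_gt1 : (1 < kappa i)%N by rewrite ltn_neqAle eq_sym kappa_neq1 kappa_gt0.
have flat k : x (s i k) = minload.
  apply/eqP; rewrite eqn_leq minload_le andbT.
  by rewrite -(eqP P0) (eqP P1) maxload_ge.
have last_lt : ((kappa i).-1 < kappa i)%N by rewrite ltn_predL kappa_gt0.
case: (posnP j0) => j0_0.
- have := implyP (F1 (Ordinal last_lt)).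
  by rewrite /= j0_0 -ltnS prednK ?kappa_gt0 // kappa_gt1 -(eqP P1) !flat eqxx => /(_ isT).
- have := implyP (F0 (Ordinal (kappa_gt0 i))).
  by rewrite /= j0_0 flat eqxx => /(_ isT).
Qed.

End Extremes.

Section Spread.
Variables (R : realType) (n K : nat) (kappa : 'I_K -> nat).
Variable s : forall i : 'I_K, 'I_(kappa i) -> 'I_n.
Arguments s : clear implicits.
Hypothesis kappa_gt0 : forall i, (0 < kappa i)%N.
Local Notation minload := (@Defs.minload n K kappa s).
Local Notation maxload := (@Defs.maxload n K kappa s).

Definition spread (x : 'I_n -> nat) : R :=
  \sum_i ((maxload x i)%:R - (minload x i)%:R).

Lemma spread_ge0 x : 0 <= spread x.
Proof.
by apply: sumr_ge0 => i _; rewrite subr_ge0 ler_nat (minload_le_maxload s kappa_gt0).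
Qed.

Lemma adjG_load_diff x j k : adjG s j k -> `|(x j)%:R - (x k)%:R| <= spread x.
Proof.
case/existsP => i /existsP [[a b]] /andP [/eqP <- /eqP <-] /=.
apply: (@le_trans _ _ ((maxload x i)%:R - (minload x i)%:R)).
  have := minload_le s x a; have := maxload_ge s x a.
  have := minload_le s x b; have := maxload_ge s x b.
  rewrite -!(ler_nat R) => h1 h2 h3 h4.
  by rewrite ler_norml; apply/andP; split; lra.
rewrite /spread (bigD1 i) //= lerDl.
by apply: sumr_ge0 => i' _; rewrite subr_ge0 ler_nat (minload_le_maxload s kappa_gt0).
Qed.

Lemma path_load_diff x l p : path (adjG s) l p ->
  `|(x l)%:R - (x (last l p))%:R| <= (size p)%:R * spread x.
Proof.
elim: p l => [|y p IHp] l /=; first by rewrite subrr normr0 mul0r.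
case/andP => adj_ly /IHp IH.
rewrite -(subrKA (x y)%:R) -addn1 natrD mulrDl mul1r addrC.
by apply: le_trans (ler_normD _ _) _; apply: lerD => //; apply: adjG_load_diff.
Qed.

(* A shortest path repeats no node, so it has fewer than [n] edges. *)
Lemma connected_load_diff x l k : G_connected s ->
  `|(x l)%:R - (x k)%:R| <= n%:R * spread x.
Proof.
move=> /(_ l k) /connectP [p p_path ->].
have [p' p'_path p'_uniq _] := shortenP p_path.
apply: le_trans (path_load_diff x p'_path) _.
rewrite ler_wpM2r ?spread_ge0 // ler_nat.
have := max_card (mem (l :: p')); rewrite card_ord (card_uniqP p'_uniq).
exact: ltnW.
Qed.

End Spread.

Section RouteSums.
Variables (R : realType) (n K : nat) (kappa : 'I_K -> nat).
Variable s : forall i : 'I_K, 'I_(kappa i) -> 'I_n.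
Arguments s : clear implicits.
Hypothesis kappa_gt0 : forall i, (0 < kappa i)%N.
Variables (x : 'I_n -> nat) (i : 'I_K) (g : 'I_(kappa i) -> R).
Local Notation is_jmin := (@Defs.is_jmin n K kappa s).
Local Notation is_jmax := (@Defs.is_jmax n K kappa s).

Lemma jsq_route_sum j0 : is_jmin x i j0 ->
  \sum_j jsq_route s i x j * g j = g j0.
Proof.
move=> H0; rewrite (bigD1 j0) //= /jsq_route H0 mul1r big1 ?addr0 // => j ne_j0.
by case: (boolP (is_jmin x i j)) => [/(jmin_unique H0) E | _];
  [rewrite E eqxx in ne_j0 | rewrite mul0r].
Qed.

Lemma ord1_eq (k : nat) (j j' : 'I_k) : k = 1%N -> j = j'.
Proof. by move=> k1; subst k; rewrite !ord1. Qed.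

Lemma pserp_route_sum lam alpha eps j0 j1 :
  0 < lam i -> \sum_j alpha i j = lam i ->
  is_jmin x i j0 -> is_jmax x i j1 ->
  lam i * \sum_j pserp_route s lam alpha eps i x j * g j
  = \sum_j alpha i j * g j + eps * (g j0 - g j1).
Proof.
move=> lam_gt0 sum_alpha H0 H1; have lam_neq0 : lam i != 0 by rewrite gt_eqF.
have [kappa1 | kappa_neq1] := eqVneq (kappa i) 1%N.
  have single (F : 'I_(kappa i) -> R) : \sum_j F j = F j0.
    by rewrite (big_pred1 j0) // => j /=; rewrite (ord1_eq j j0 kappa1) eqxx.
  rewrite -sum_alpha !single (ord1_eq j1 j0 kappa1) /pserp_route kappa1 eqxx.
  by rewrite subrr mulr0 addr0 mul1r.
have j0_neq_j1 := jmin_neq_jmax kappa_gt0 kappa_neq1 H0 H1.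
have weight j : lam i * pserp_route s lam alpha eps i x j
    = alpha i j + eps * ((j == j0)%:R - (j == j1)%:R).
  rewrite /pserp_route (negbTE kappa_neq1).
  case: (boolP (is_jmin x i j)) => [/(jmin_unique H0) <- | not_min].
    by rewrite eqxx (negbTE j0_neq_j1) /=; field.
  case: (boolP (is_jmax x i j)) => [/(jmax_unique H1) <- | not_max].
    by rewrite eqxx eq_sym (negbTE j0_neq_j1) /=; field.
  have -> : (j == j0) = false by apply: contraNF not_min => /eqP ->.
  have -> : (j == j1) = false by apply: contraNF not_max => /eqP ->.
  by rewrite /=; field.
rewrite mulr_sumr; under eq_bigr do rewrite mulrA weight mulrDl.
rewrite big_split /=; congr (_ + _).
under eq_bigr do rewrite -mulrA mulrBl.
by rewrite -mulr_sumr sumrB !sum_delta_mulr.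
Qed.

End RouteSums.

Section Drift.
Variables (R : realType) (n K : nat) (kappa : 'I_K -> nat).
Variable s : forall i : 'I_K, 'I_(kappa i) -> 'I_n.
Arguments s : clear implicits.
Hypothesis kappa_gt0 : forall i, (0 < kappa i)%N.
Hypothesis n_gt0 : (0 < n)%N.
Variables (lam : 'I_K -> R) (alpha : forall i : 'I_K, 'I_(kappa i) -> R).
Arguments alpha : clear implicits.
Hypothesis lam_gt0 : forall i, 0 < lam i.
Hypothesis lam_sum1 : \sum_i lam i = 1.
Hypothesis alpha_sol : pos_solution s lam alpha.
Local Notation minload := (@Defs.minload n K kappa s).
Local Notation maxload := (@Defs.maxload n K kappa s).
Local Notation dev := (@dev R n).

Let c0 : R := 1 - n%:R^-1.
Let gain x i (j : 'I_(kappa i)) : R := 2 * dev x (s i j) + c0.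

Lemma drift_gain route x :
  drift s lam route x = \sum_i lam i * \sum_j route i x j * gain x j.
Proof.
by apply: eq_bigr => i _; congr (_ * _); apply: eq_bigr => j _; rewrite fL_add_item.
Qed.

(* The solution spreads total weight [1/n] on every node, and deviations sum to [0]. *)
Lemma solution_gain_sum x : \sum_i \sum_j alpha i j * gain x j = c0.
Proof.
have [_ [sum_alpha node_weight]] := alpha_sol.
have dev_sum : \sum_i \sum_j alpha i j * dev x (s i j) = 0.
  transitivity (\sum_l \sum_i \sum_j alpha i j * ((s i j == l)%:R * dev x l)).
    rewrite exchange_big /=; apply: eq_bigr => i _; rewrite exchange_big /=.
    apply: eq_bigr => j _; rewrite -mulr_sumr.
    by under eq_bigr do rewrite (eq_sym (s i j)); rewrite sum_delta_mulr.
  transitivity (\sum_l dev x l * n%:R^-1); last by rewrite -mulr_suml sum_dev ?mul0r.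
  apply: eq_bigr => l _; rewrite -(node_weight l) mulr_sumr; apply: eq_bigr => i _.
  by rewrite mulr_sumr; apply: eq_bigr => j _; ring.
under eq_bigr do under eq_bigr do rewrite mulrDr mulrCA.
under eq_bigr do rewrite big_split /= -mulr_sumr -mulr_suml sum_alpha.
by rewrite big_split /= -mulr_sumr dev_sum mulr0 add0r -mulr_suml lam_sum1 mul1r.
Qed.

Lemma drift_pserp eps x :
  drift s lam (pserp_route s lam alpha eps) x = c0 - 2 * eps * spread R s x.
Proof.
have [_ [sum_alpha _]] := alpha_sol.
rewrite drift_gain -(solution_gain_sum x) /spread mulr_sumr -sumrB; apply: eq_bigr => i _.
have [j0 H0] := jmin_exists s kappa_gt0 x i.
have [j1 H1] := jmax_exists s kappa_gt0 x i.
rewrite (pserp_route_sum kappa_gt0 _ _ (lam_gt0 i) (sum_alpha i) H0 H1) /gain /dev.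
by case/andP: H0 => /eqP -> _; case/andP: H1 => /eqP -> _; ring.
Qed.

(* JSQ sends everything to the first minimiser; compared with the weights
   [alpha], each node of [S_i] loses [2 (x - minload)], which is at least the
   spread of [S_i] at a maximiser. *)
Lemma drift_jsq beta x : (forall i j, beta <= alpha i j) ->
  drift s lam (jsq_route s) x <= c0 - 2 * beta * spread R s x.
Proof.
move=> beta_le; have [alpha_gt0 [sum_alpha _]] := alpha_sol.
rewrite drift_gain -(solution_gain_sum x) /spread mulr_sumr -sumrB; apply: ler_sum => i _.
have [j0 H0] := jmin_exists s kappa_gt0 x i.
have [j1 H1] := maxload_attained s kappa_gt0 x i.
have above_min j : (minload x i)%:R <= (x (s i j))%:R :> R by rewrite ler_nat minload_le.
rewrite (jsq_route_sum _ H0) -sum_alpha mulr_suml.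
have -> : \sum_j alpha i j * gain x j0 = \sum_j alpha i j * gain x j
    - 2 * \sum_j alpha i j * ((x (s i j))%:R - (minload x i)%:R).
  rewrite mulr_sumr -sumrB; apply: eq_bigr => j _.
  by case/andP: H0 => /eqP H0 _; rewrite /gain /dev H0; ring.
rewrite lerD2l lerN2 -mulrA ler_wpM2l // (bigD1 j1) //= -H1 -[X in X <= _]addr0.
apply: lerD; first by rewrite ler_wpM2r ?subr_ge0.
by apply: sumr_ge0 => j _; rewrite mulr_ge0 ?subr_ge0 // ltW.
Qed.

End Drift.

Lemma pos_family_lower_bound (R : realType) (I : finType) (J : I -> finType)
    (a : forall i, J i -> R) :
  (forall i j, 0 < a i j) -> exists2 beta, 0 < beta & forall i j, beta <= a i j.
Proof.
move=> a_gt0; exists (\big[Num.min/1]_i \big[Num.min/1]_j a i j).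
  by apply: lt_bigmin => // i _; apply: lt_bigmin.
by move=> i j; apply: le_trans (bigmin_le _ i _) (bigmin_le _ j _).
Qed.

Unset Implicit Arguments.

Theorem lemma3p4 (R : realType) (n K : nat) (kappa : 'I_K -> nat)
  (s : forall i : 'I_K, 'I_(kappa i) -> 'I_n) (lam : 'I_K -> R)
  (route : forall i : 'I_K, ('I_n -> nat) -> 'I_(kappa i) -> R) :
  (forall i, (0 < kappa i)%N) ->
  (forall i, injective (s i)) ->
  (forall l : 'I_n, exists i j, s i j = l) ->
  (forall i, 0 < lam i) ->
  \sum_(i < K) lam i = 1 ->
  G_connected s ->
  (exists alpha, pos_solution s lam alpha) ->
  (route = jsq_route s \/
   exists (alpha : forall i : 'I_K, 'I_(kappa i) -> R) (eps : R),
     [/\ pos_solution s lam alpha, 0 < eps, (forall i j, eps < alpha i j)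
       & route = pserp_route s lam alpha eps]) ->
  exists c2 a : R, [/\ 0 < c2, 0 < a &
    forall x : 'I_n -> nat, a <= maxdev x ->
      drift s lam route x <= - (c2 * Num.sqrt (fL x))].
Proof.
move=> kappa_gt0 _ _ lam_gt0 lam_sum1 G_conn [alpha0 sol0] route_def.
have [n0 | n_gt0] := posnP n.
  exists 1, 1; split=> // x.
  have -> : maxdev x = 0 :> R.
    by rewrite /maxdev; move: x; rewrite n0 => x; rewrite big_ord0.
  by rewrite ler10.
have [beta beta_gt0 drift_le] : exists2 beta, 0 < beta &
    forall x, drift s lam route x <= 1 - n%:R^-1 - 2 * beta * spread R s x.
  case: route_def => [-> | [alpha [eps [sol eps_gt0 _ ->]]]].
    have [beta beta_gt0 beta_le] := pos_family_lower_bound (proj1 sol0).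
    by exists beta => // x; apply: (drift_jsq kappa_gt0 n_gt0 lam_sum1 sol0).
  by exists eps => // x; rewrite (drift_pserp kappa_gt0 n_gt0 lam_gt0 lam_sum1 sol).
have n_pos : (0 : R) < n%:R by rewrite ltr0n.
exists (beta / (n%:R * n%:R)), (n%:R / beta); split; rewrite ?divr_gt0 ?mulr_gt0 //.
move=> x a_le_maxdev.
have spread_x_ge0 := spread_ge0 R s kappa_gt0 x.
have dev_le l : `|dev R x l| <= n%:R * spread R s x.
  by apply: dev_le_of_diff => // k; apply: connected_load_diff.
have nspread_ge0 : 0 <= n%:R * spread R s x by rewrite mulr_ge0 // ltW.
have spread_big : 1 <= beta * spread R s x.
  have := le_trans a_le_maxdev (maxdev_le nspread_ge0 dev_le).
  by rewrite ler_pdivrMr // -mulrA ler_pMr // mulrC.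
have := sqrt_fL_le n_gt0 nspread_ge0 dev_le.
rewrite -(ler_pM2l (_ : 0 < beta / (n%:R * n%:R))) ?divr_gt0 ?mulr_gt0 //.
have -> : beta / (n%:R * n%:R) * (n%:R * (n%:R * spread R s x)) = beta * spread R s x.
  by field; rewrite gt_eqF.
move=> sqrt_le.
have := drift_le x; have : (0 : R) <= n%:R^-1 by rewrite invr_ge0 ltW.
lra.
Qed.
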